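(* Let $(X,d)$ be a path-connected metric space, $n\geq 1$, and $\gamma:[0,1]\to X$ a path. The change-of-basepoint group isomorphism $\Gamma:\pi_n(X,\gamma(1))\to\pi_n(X,\gamma(0))$, $\Gamma([\beta])=[\gamma\ast\beta]$, is an isometry with respect to the pseudometrics $\rho$ on these groups.
   Context: Identify $n$-loops with based maps $(S^n,d_0)\to X$, $d_0=(1,0,\dots,0)$, with uniform metric $\mu(\alpha,\beta)=\sup_{t\in S^n}d(\alpha(t),\beta(t))$; for $a,b\in\pi_n(X,x)$, $\rho(a,b)=\inf\{\mu(\alpha,\beta)\mid\alpha\in a,\beta\in b\}$. Path-conjugation: fix once and for all a retraction $r:S^n\times[0,1]\to S^n\times\{0\}\cup\{d_0\}\times[0,1]$. For a path $\gamma$ and a based map $\alpha:(S^n,d_0)\to(X,\gamma(1))$, let $h:S^n\times\{0\}\cup\{d_0\}\times[0,1]\to X$ be $\alpha$ on $S^n\times\{0\}$ and $h(d_0,s)=\gamma(1-s)$; then $\gamma\ast\alpha:(S^n,d_0)\to(X,\gamma(0))$ is $t\mapsto h(r(t,1))$. *)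

From HB Require Import structures.
From mathcomp Require Import all_boot all_order all_algebra.
From mathcomp Require Import all_classical all_reals all_analysis.
Import Order.TTheory GRing.Theory Num.Theory.
Import numFieldNormedType.Exports.
Local Open Scope classical_set_scope.
Local Open Scope ring_scope.

(* Conventions: S^n is the unit sphere in R^(n+1) = 'rV[R]_(n.+1).
   Maps S^n -> X are represented by functions 'rV[R]_(n.+1) -> X; only
   their values on the sphere matter. *)

Definition sphere (R : realType) (n : nat) : set 'rV[R]_(n.+1) :=
  [set v | \sum_(i < n.+1) (v ord0 i) ^+ 2 = 1].

Definition d0 (R : realType) (n : nat) : 'rV[R]_(n.+1) :=
  \row_(i < n.+1) (i == ord0)%:R.

Definition unit_interval (R : realType) : set R := `[0, 1]%classic.

Definition is_metric (R : realType) (X : pseudoMetricType R)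
    (d : X -> X -> R) : Prop :=
  [/\ (forall x y, 0 <= d x y),
      (forall x y, d x y = 0 <-> x = y),
      (forall x y, d x y = d y x),
      (forall x y z, d x z <= d x y + d y z) &
      (forall x y (e : R), 0 < e -> (ball x e y <-> d x y < e))].

Definition is_path (R : realType) (X : topologicalType) (g : R -> X) : Prop :=
  {within unit_interval R, continuous g}.

Definition path_connected_sp (R : realType) (X : topologicalType) : Prop :=
  forall x y : X, exists g : R -> X, is_path R X g /\ g 0 = x /\ g 1 = y.

Definition based_map (R : realType) (X : topologicalType) (n : nat) (x : X)
    (a : 'rV[R]_(n.+1) -> X) : Prop :=
  {within sphere R n, continuous a} /\ a (d0 R n) = x.

Definition based_homotopic (R : realType) (X : topologicalType) (n : nat)
    (x : X) (a b : 'rV[R]_(n.+1) -> X) : Prop :=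
  exists H : 'rV[R]_(n.+1) * R -> X,
    [/\ {within sphere R n `*` unit_interval R, continuous H},
        (forall t, sphere R n t -> H (t, 0) = a t),
        (forall t, sphere R n t -> H (t, 1) = b t) &
        (forall s, unit_interval R s -> H (d0 R n, s) = x)].

Definition mu (R : realType) (X : Type) (d : X -> X -> R) (n : nat)
    (a b : 'rV[R]_(n.+1) -> X) : \bar R :=
  ereal_sup [set (d (a t) (b t))%:E | t in sphere R n].

Definition rho (R : realType) (X : topologicalType) (d : X -> X -> R)
    (n : nat) (x : X) (a b : 'rV[R]_(n.+1) -> X) : \bar R :=
  ereal_inf [set e | exists a' b' : 'rV[R]_(n.+1) -> X,
     [/\ based_map R X n x a', based_homotopic R X n x a' a,
          based_map R X n x b', based_homotopic R X n x b' b &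
          e = mu R X d n a' b']].

Definition retr_target (R : realType) (n : nat) : set ('rV[R]_(n.+1) * R) :=
  (sphere R n `*` [set 0]) `|` ([set d0 R n] `*` unit_interval R).

Definition is_retraction (R : realType) (n : nat)
    (r : 'rV[R]_(n.+1) * R -> 'rV[R]_(n.+1) * R) : Prop :=
  [/\ {within sphere R n `*` unit_interval R, continuous r},
      (forall p, (sphere R n `*` unit_interval R) p -> retr_target R n (r p)) &
      (forall p, retr_target R n p -> r p = p)].

Definition path_conj (R : realType) (X : Type) (n : nat)
    (r : 'rV[R]_(n.+1) * R -> 'rV[R]_(n.+1) * R)
    (g : R -> X) (a : 'rV[R]_(n.+1) -> X) : 'rV[R]_(n.+1) -> X :=
  let h := fun p : 'rV[R]_(n.+1) * R =>
             if p.1 == d0 R n then g (1 - p.2) else a p.1 in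
  fun t => h (r (t, 1)).

From HB Require Import structures.
From mathcomp Require Import all_boot all_order all_algebra.
From mathcomp Require Import all_classical all_reals all_analysis.
From mathcomp Require Import lra.
Import Order.TTheory GRing.Theory Num.Theory.
Import numFieldNormedType.Exports.

Set Implicit Arguments.
Unset Strict Implicit.
Unset Printing Implicit Defensive.
Local Open Scope classical_set_scope.
Local Open Scope ring_scope.

(* Conjugation by a path does not increase the uniform distance: at each point
   of the sphere the two conjugated maps either take the same value on the path,
   or take the values of the original maps at a common point of the sphere.
   Conjugation also preserves based maps and based homotopies, hence
   rho (g b1) (g b2) <= rho b1 b2.  Conversely, conjugating back along the
   reverse path recovers b up to based homotopy, and rho only depends on the
   homotopy classes, so the same inequality for the reverse path gives the
   other direction.  The homotopy (reverse g)(g b) ~ b comes from the free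
   homotopy h o r between b and g b, whose base point runs backwards along g. *)

Section within_continuity.
Context {T U W : topologicalType}.

Lemma within_comp_continuous (A : set T) (B : set U) (f : T -> U) (g : U -> W) :
  {within A, continuous f} -> (forall x, A x -> B (f x)) ->
  {within B, continuous g} -> {within A, continuous (g \o f)}.
Proof.
move=> /subspace_continuousP cf AB /subspace_continuousP cg.
apply/subspace_continuousP => x Ax V /(cg _ (AB x Ax)) /(cf _ Ax).
rewrite !nbhs_simpl /= => gfV; apply: (@filterS _ (nbhs x) _ _ _ _ gfV).
by move=> z /= gfVz Az; exact: gfVz Az (AB _ Az).
Qed.

Lemma within_continuous_pair (A : set T) (f : T -> U) (g : T -> W) :
  {within A, continuous f} -> {within A, continuous g} ->
  {within A, continuous (fun x => (f x, g x))}.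
Proof.
move=> /subspace_continuousP cf /subspace_continuousP cg.
by apply/subspace_continuousP => x Ax; exact: cvg_pair (cf _ Ax) (cg _ Ax).
Qed.

Lemma within_continuous_fst (A : set (T * U)) : {within A, continuous fst}.
Proof. by apply: continuous_subspaceT => x; exact: cvg_fst. Qed.

Lemma within_continuous_snd (A : set (T * U)) : {within A, continuous snd}.
Proof. by apply: continuous_subspaceT => x; exact: cvg_snd. Qed.

Lemma within_continuous_eq (A : set T) (f g : T -> U) :
  {within A, continuous f} -> (forall x, A x -> f x = g x) ->
  {within A, continuous g}.
Proof. by move=> cf fg; apply: subspace_eq_continuous cf => x /set_mem /fg. Qed.

Lemma closed_setX (A : set T) (B : set U) :
  closed A -> closed B -> closed (A `*` B).
Proof.
move=> cA cB; rewrite -[_ `*` _]/(fst @^-1` A `&` snd @^-1` B).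
by apply: closedI; apply: preimage_closed => //= x _; [exact: cvg_fst|exact: cvg_snd].
Qed.

End within_continuity.

Section sphere_interval.
Variables (R : realType) (n : nat).

Lemma unit_intervalP (s : R) : unit_interval R s <-> 0 <= s <= 1.
Proof. by rewrite /unit_interval /= in_itv. Qed.

Lemma unit_interval1 : unit_interval R 1.
Proof. by apply/unit_intervalP; rewrite lexx ler01. Qed.

Lemma closed_unit_interval : closed (unit_interval R).
Proof. exact: interval_closed. Qed.

Lemma sphere_d0 : sphere R n (d0 R n).
Proof.
rewrite /sphere /d0 /= big_ord_recl /= !mxE eqxx big1 ?addr0 ?expr1n //.
by move=> i _; rewrite !mxE /= expr0n.
Qed.

Lemma closed_sphere : closed (sphere R n).
Proof.
have sum_sq : continuous (fun v : 'rV[R]_n.+1 => \sum_(i < n.+1) v ord0 i ^+ 2).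
  apply: continuous_big => [[x y]|i _ v]; first exact: (cvgD cvg_fst cvg_snd).
  by apply: continuousM; exact: coord_continuous.
by apply: preimage_closed (closed_eq (y := 1)) => v _; exact: sum_sq.
Qed.

Lemma closed_d0 : closed [set d0 R n].
Proof.
exact: accessible_closed_set1 (hausdorff_accessible (@norm_hausdorff _ _)) (d0 R n).
Qed.

End sphere_interval.

Definition reverse_path (R : realType) (X : Type) (p : R -> X) : R -> X :=
  fun s => p (1 - s).

Lemma continuous_one_minus (R : realType) : continuous (fun s : R => 1 - s).
Proof. by move=> s; apply: cvgB; [exact: cvg_cst|exact: cvg_id]. Qed.

Lemma is_path_reverse (R : realType) (X : topologicalType) (p : R -> X) :
  is_path R X p -> is_path R X (reverse_path p).
Proof.
move=> p_path; apply: (within_comp_continuous (f := fun s : R => 1 - s) _ _ p_path).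
  exact/continuous_subspaceT/continuous_one_minus.
by move=> s /unit_intervalP sI; apply/unit_intervalP; lra.
Qed.

Section homotopy_along.
Variables (R : realType) (n : nat) (X : topologicalType).
Local Notation cylinder := (sphere R n `*` unit_interval R).

(* For a constant [p] this is exactly [based_homotopic]. *)
Definition homotopy_along (p : R -> X) (a b : 'rV[R]_n.+1 -> X)
    (F : 'rV[R]_n.+1 * R -> X) : Prop :=
  [/\ {within cylinder, continuous F},
      (forall t, sphere R n t -> F (t, 0) = a t),
      (forall t, sphere R n t -> F (t, 1) = b t) &
      (forall s, unit_interval R s -> F (d0 R n, s) = p s)].

Lemma within_continuous_reparam (A : set ('rV[R]_n.+1 * R)) (phi : R -> R)
    (H : 'rV[R]_n.+1 * R -> X) :
  {within cylinder, continuous H} -> continuous phi ->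
  (forall q, A q -> cylinder (q.1, phi q.2)) ->
  {within A, continuous (fun q => H (q.1, phi q.2))}.
Proof.
move=> cH cphi AH.
apply: (within_comp_continuous (f := fun q => (q.1, phi q.2)) _ AH cH).
apply: within_continuous_pair; first exact: within_continuous_fst.
apply: continuous_subspaceT => q.
by apply: continuous_comp; [exact: cvg_snd|exact: cphi].
Qed.

Lemma homotopy_along_reverse p a b F :
  homotopy_along p a b F ->
  homotopy_along (reverse_path p) b a (fun q => F (q.1, 1 - q.2)).
Proof.
move=> [cF F0 F1 Fd]; split.
- apply: (within_continuous_reparam cF (@continuous_one_minus R)).
  by move=> [t s] /= [St /unit_intervalP sI]; split => //; apply/unit_intervalP; lra.
- by move=> t St /=; rewrite subr0 F1.
- by move=> t St /=; rewrite subrr F0.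
- by move=> s /unit_intervalP sI /=; rewrite Fd //; apply/unit_intervalP; lra.
Qed.

Lemma based_homotopic_sym x a b :
  based_homotopic R X n x a b -> based_homotopic R X n x b a.
Proof.
by move=> [F /homotopy_along_reverse hF]; exists (fun q => F (q.1, 1 - q.2)).
Qed.

Lemma based_homotopic_trans x a b c :
  based_homotopic R X n x a b -> based_homotopic R X n x b c ->
  based_homotopic R X n x a c.
Proof.
move=> [H [cH H0 H1 Hd]] [K [cK K0 K1 Kd]].
have c2 : continuous (fun s : R => 2 * s).
  by move=> s; apply: cvgM; [exact: cvg_cst|exact: cvg_id].
have c2m1 : continuous (fun s : R => 2 * s - 1).
  by move=> s; apply: cvgB; [exact: c2|exact: cvg_cst].
exists (fun q => if q.2 <= 2^-1 then H (q.1, 2 * q.2) else K (q.1, 2 * q.2 - 1)).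
split.
- have -> : cylinder = (sphere R n `*` `[0, 2^-1]) `|` (sphere R n `*` `[2^-1, 1]).
    apply/seteqP; split => -[t s] /=.
      move=> [St /unit_intervalP sI]; rewrite !in_itv /=.
      by case: (lerP s 2^-1) => hs; [left|right]; split => //; apply/andP; lra.
    by rewrite !in_itv /= => -[] [St /andP sI]; split => //; apply/unit_intervalP; lra.
  apply: withinU_continuous.
  + by apply: closed_setX; [exact: closed_sphere|exact: interval_closed].
  + by apply: closed_setX; [exact: closed_sphere|exact: interval_closed].
  + apply: (within_continuous_eq (within_continuous_reparam cH c2 _)).
      move=> [t s] /=; rewrite in_itv /= => -[St /andP sI].
      by split => //; apply/unit_intervalP; lra.
    by move=> [t s] /=; rewrite in_itv /= => -[_ /andP [_ ->]].
  + apply: (within_continuous_eq (within_continuous_reparam cK c2m1 _)).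
      move=> [t s] /=; rewrite in_itv /= => -[St /andP sI].
      by split => //; apply/unit_intervalP; lra.
    move=> [t s] /=; rewrite in_itv /= => -[St /andP sI].
    case: ifP => // hs; have -> : s = 2^-1 by lra.
    by rewrite mulfV ?pnatr_eq0 // subrr H1 ?K0.
- by move=> t St; rewrite /= invr_ge0 ler0n mulr0 H0.
- move=> t St; rewrite /= ifF; last by apply/negbTE; rewrite -ltNge; lra.
  by rewrite mulr1 (_ : 2 - 1 = 1 :> R) ?K1 //; lra.
- move=> s /unit_intervalP sI /=; case: ifP => hs.
    by rewrite Hd //; apply/unit_intervalP; lra.
  by rewrite Kd //; apply/unit_intervalP; move/negbT: hs; rewrite -ltNge; lra.
Qed.

End homotopy_along.

Section path_conj_pointwise.
Variables (R : realType) (n : nat) (X : Type).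
Variable r : 'rV[R]_n.+1 * R -> 'rV[R]_n.+1 * R.
Hypothesis r_retr : is_retraction R n r.

Definition conj_h (p : R -> X) (a : 'rV[R]_n.+1 -> X) (q : 'rV[R]_n.+1 * R) : X :=
  if q.1 == d0 R n then p (1 - q.2) else a q.1.

Lemma path_conjE p a t : path_conj R X n r p a t = conj_h p a (r (t, 1)).
Proof. by []. Qed.

Lemma retraction_top t : sphere R n t -> retr_target R n (r (t, 1)).
Proof.
by case: r_retr => _ r_maps _ St; apply: r_maps; split => //; exact: unit_interval1.
Qed.

Lemma retraction_bottom t : sphere R n t -> r (t, 0) = (t, 0).
Proof. by case: r_retr => _ _ r_id St; apply: r_id; left. Qed.

Lemma retraction_d0 s : unit_interval R s -> r (d0 R n, s) = (d0 R n, s).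
Proof. by case: r_retr => _ _ r_id sI; apply: r_id; right. Qed.

Lemma retr_target_sphere q : retr_target R n q -> q.1 != d0 R n -> sphere R n q.1.
Proof. by case=> [[]|[/= ->]] //; rewrite eqxx. Qed.

Lemma conj_h_eq_on_sphere p a b q :
  (forall v, sphere R n v -> a v = b v) -> retr_target R n q ->
  conj_h p a q = conj_h p b q.
Proof.
move=> ab q_retr; rewrite /conj_h.
by case: eqP => // /eqP /(retr_target_sphere q_retr) /ab.
Qed.

Lemma path_conj_d0 p a : path_conj R X n r p a (d0 R n) = p 0.
Proof.
rewrite path_conjE retraction_d0; last exact: unit_interval1.
by rewrite /conj_h /= eqxx subrr.
Qed.

Lemma mu_path_conj_le (d : X -> X -> R) p a b :
  (forall x y, 0 <= d x y) -> (forall x, d x x = 0) ->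
  (mu R X d n (path_conj R X n r p a) (path_conj R X n r p b) <= mu R X d n a b)%E.
Proof.
move=> d_ge0 d_xx; apply: ge_ereal_sup => _ [t St <-].
rewrite !path_conjE /conj_h; case: eqP => [_|/eqP not_d0].
  rewrite d_xx; apply: (@le_trans _ _ (d (a (d0 R n)) (b (d0 R n)))%:E).
    by rewrite lee_fin.
  by apply: ereal_sup_ubound; exists (d0 R n) => //; exact: sphere_d0.
apply: ereal_sup_ubound; exists (r (t, 1)).1 => //.
exact: retr_target_sphere (retraction_top St) not_d0.
Qed.

End path_conj_pointwise.

Section path_conj_homotopy.
Variables (R : realType) (n : nat) (X : topologicalType).
Variable r : 'rV[R]_n.+1 * R -> 'rV[R]_n.+1 * R.
Hypothesis r_retr : is_retraction R n r.
Local Notation cylinder := (sphere R n `*` unit_interval R).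
Local Notation square := (unit_interval R `*` unit_interval R).

Lemma within_continuous_conj_h (P : R -> R -> X) (K : 'rV[R]_n.+1 * R -> X) :
  {within square, continuous (fun x => P x.1 x.2)} ->
  {within cylinder, continuous K} ->
  (forall u, unit_interval R u -> K (d0 R n, u) = P u 1) ->
  {within retr_target R n `*` unit_interval R,
    continuous (fun z => conj_h (P z.2) (fun v => K (v, z.2)) z.1)}.
Proof.
move=> cP cK KP.
have -> : retr_target R n `*` unit_interval R =
    ((sphere R n `*` [set 0]) `*` unit_interval R) `|`
    (([set d0 R n] `*` unit_interval R) `*` unit_interval R).
  apply/seteqP; split => -[[v s] u] /=.
    by move=> [[[Sv s0]|[vd sI]] uI]; [left|right].
  by case=> [[[Sv s0] uI]|[[vd sI] uI]]; split => //; [left|right].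
have c11 : continuous (fun z : ('rV[R]_n.+1 * R) * R => z.1.1).
  by move=> z; apply: continuous_comp; exact: cvg_fst.
have c12 : continuous (fun z : ('rV[R]_n.+1 * R) * R => z.1.2).
  by move=> z; apply: continuous_comp; [exact: cvg_fst|exact: cvg_snd].
apply: withinU_continuous.
- apply: closed_setX; last exact: closed_unit_interval.
  by apply: closed_setX; [exact: closed_sphere|exact: closed_eq].
- apply: closed_setX; last exact: closed_unit_interval.
  by apply: closed_setX; [exact: closed_d0|exact: closed_unit_interval].
- apply: (within_continuous_eq (f := K \o fun z => (z.1.1, z.2))).
    apply: (within_comp_continuous _ _ cK); last by move=> [[v s] u] [[]].
    apply: within_continuous_pair; last exact: within_continuous_snd.
    exact: continuous_subspaceT c11.
  move=> [[v s] u] [[Sv /= ->] uI]; rewrite /conj_h /=.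
  by case: eqP => [->|//]; rewrite subr0 KP.
- apply: (within_continuous_eq
    (f := (fun x => P x.1 x.2) \o fun z => (z.2, 1 - z.1.2))).
    apply: (within_comp_continuous _ _ cP); last first.
      move=> [[v s] u] /= [[_ /unit_intervalP sI] uI]; split => //=.
      by apply/unit_intervalP; lra.
    apply: within_continuous_pair; first exact: within_continuous_snd.
    by apply: continuous_subspaceT => z; apply: cvgB; [exact: cvg_cst|exact: c12].
  by move=> [[v s] u] [[/= -> _] _]; rewrite /conj_h /= eqxx.
Qed.

Lemma within_continuous_conj_h_retract (P : R -> R -> X)
    (K : 'rV[R]_n.+1 * R -> X) (rho : 'rV[R]_n.+1 * R -> 'rV[R]_n.+1 * R) :
  {within square, continuous (fun x => P x.1 x.2)} ->
  {within cylinder, continuous K} ->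
  (forall u, unit_interval R u -> K (d0 R n, u) = P u 1) ->
  {within cylinder, continuous rho} ->
  (forall q, cylinder q -> retr_target R n (rho q)) ->
  {within cylinder, continuous (fun q => conj_h (P q.2) (fun v => K (v, q.2)) (rho q))}.
Proof.
move=> cP cK KP crho rho_maps.
apply: (within_comp_continuous (f := fun q => (rho q, q.2)) _ _
  (within_continuous_conj_h cP cK KP)).
  by apply: within_continuous_pair => //; exact: within_continuous_snd.
by move=> q cq; split; [exact: rho_maps|case: cq].
Qed.

Lemma within_continuous_path_family (p : R -> X) :
  is_path R X p -> {within square, continuous (fun x => p x.2)}.
Proof.
move=> p_path; apply: (within_comp_continuous _ _ p_path).
  exact: within_continuous_snd.
by move=> x [].
Qed.

Lemma based_homotopic_path_conj_family x (P : R -> R -> X)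
    (K : 'rV[R]_n.+1 * R -> X) a b :
  {within square, continuous (fun x => P x.1 x.2)} ->
  {within cylinder, continuous K} ->
  (forall u, unit_interval R u -> P u 0 = x) ->
  (forall u, unit_interval R u -> K (d0 R n, u) = P u 1) ->
  (forall t, sphere R n t -> K (t, 0) = a t) ->
  (forall t, sphere R n t -> K (t, 1) = b t) ->
  based_homotopic R X n x (path_conj R X n r (P 0) a) (path_conj R X n r (P 1) b).
Proof.
move=> cP cK Px KP K0 K1.
have [r_cont r_maps _] := r_retr.
exists (fun q => conj_h (P q.2) (fun v => K (v, q.2)) (r (q.1, 1))); split.
- apply: within_continuous_conj_h_retract => //; last first.
    by move=> q [Sq _]; exact: retraction_top.
  apply: (within_comp_continuous
    (f := fun q : 'rV[R]_n.+1 * R => (q.1, 1 : R)) _ _ r_cont).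
    apply: within_continuous_pair; first exact: within_continuous_fst.
    exact/continuous_subspaceT/cst_continuous.
  by move=> q [Sq _]; split => //; exact: unit_interval1.
- move=> t St; rewrite path_conjE.
  exact: conj_h_eq_on_sphere (retraction_top r_retr St).
- move=> t St; rewrite path_conjE.
  exact: conj_h_eq_on_sphere (retraction_top r_retr St).
- move=> s sI /=; rewrite retraction_d0 //; last exact: unit_interval1.
  by rewrite /conj_h /= eqxx subrr Px.
Qed.

Lemma based_homotopic_path_conj (p : R -> X) a b :
  is_path R X p -> based_homotopic R X n (p 1) a b ->
  based_homotopic R X n (p 0) (path_conj R X n r p a) (path_conj R X n r p b).
Proof.
move=> p_path [K [cK K0 K1 Kd]].
exact: (based_homotopic_path_conj_family (P := fun _ => p)
  (within_continuous_path_family p_path) cK).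
Qed.

Lemma homotopy_along_path_conj (p : R -> X) a :
  is_path R X p -> based_map R X n (p 1) a ->
  homotopy_along (reverse_path p) a (path_conj R X n r p a) (fun q => conj_h p a (r q)).
Proof.
move=> p_path [ca ad]; have [r_cont r_maps _] := r_retr; split.
- apply: (within_continuous_conj_h_retract
    (P := fun _ => p) (K := fun q => a q.1)) => //.
  + exact: within_continuous_path_family.
  + apply: (within_comp_continuous _ _ ca); last by move=> q [].
    exact: within_continuous_fst.
- move=> t St /=; rewrite retraction_bottom // /conj_h /=.
  by case: eqP => [->|//]; rewrite subr0 ad.
- by [].
- by move=> s sI; rewrite /= retraction_d0 // /conj_h /= eqxx.
Qed.

Lemma based_map_path_conj (p : R -> X) a :
  is_path R X p -> based_map R X n (p 1) a ->
  based_map R X n (p 0) (path_conj R X n r p a).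
Proof.
move=> p_path a_based; split; last exact: path_conj_d0.
have [cF _ _ _] := homotopy_along_path_conj p_path a_based.
apply: (within_comp_continuous (f := fun t : 'rV[R]_n.+1 => (t, 1 : R)) _ _ cF).
  apply: within_continuous_pair.
    by apply: continuous_subspaceT => t; exact: cvg_id.
  exact/continuous_subspaceT/cst_continuous.
by move=> t St; split => //; exact: unit_interval1.
Qed.

Lemma path_conj_const_homotopic x b :
  based_map R X n x b -> based_homotopic R X n x b (path_conj R X n r (fun _ => x) b).
Proof.
move=> b_based; eexists; apply: (homotopy_along_path_conj _ b_based).
exact/continuous_subspaceT/cst_continuous.
Qed.

Lemma path_conj_homotopic_of_along (p : R -> X) a b F :
  is_path R X p -> based_map R X n (p 0) b ->
  homotopy_along (reverse_path p) a b F ->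
  based_homotopic R X n (p 0) (path_conj R X n r p a) b.
Proof.
move=> p_path b_based [cF F0 F1 Fd].
have cP : {within square, continuous (fun x => p ((1 - x.1) * x.2))}.
  apply: (within_comp_continuous (f := fun x : R * R => (1 - x.1) * x.2) _ _ p_path).
    apply: continuous_subspaceT => x; apply: cvgM; last exact: cvg_snd.
    by apply: cvgB; [exact: cvg_cst|exact: cvg_fst].
  move=> [u s] [/unit_intervalP uI /unit_intervalP sI]; apply/unit_intervalP.
  by apply/andP; split; [apply: mulr_ge0|apply: mulr_ile1]; lra.
(* Shrink the paths [s |-> p ((1 - u) * s)] to the constant path at [p 0]. *)
have shrink : based_homotopic R X n (p 0)
    (path_conj R X n r p a) (path_conj R X n r (fun _ => p 0) b).
  have := based_homotopic_path_conj_family (x := p 0)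
    (P := fun u s => p ((1 - u) * s)) cP cF _ _ F0 F1.
  rewrite (_ : (fun s => p ((1 - 0) * s)) = p); last first.
    by apply: funext => s; rewrite subr0 mul1r.
  rewrite (_ : (fun s => p ((1 - 1) * s)) = fun _ => p 0); last first.
    by apply: funext => s; rewrite subrr mul0r.
  apply.
  - by move=> u _; rewrite mulr0.
  - by move=> u uI; rewrite Fd // mulr1.
apply: based_homotopic_trans shrink _.
exact/based_homotopic_sym/path_conj_const_homotopic.
Qed.

Lemma path_conj_reverse_homotopic (g : R -> X) b :
  is_path R X g -> based_map R X n (g 1) b ->
  based_homotopic R X n (g 1)
    (path_conj R X n r (reverse_path g) (path_conj R X n r g b)) b.
Proof.
move=> g_path b_based.
have g1 : reverse_path g 0 = g 1 by rewrite /reverse_path subr0.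
rewrite -g1; apply: path_conj_homotopic_of_along.
- exact: is_path_reverse.
- by rewrite g1.
- exact: homotopy_along_reverse (homotopy_along_path_conj g_path b_based).
Qed.

End path_conj_homotopy.

Section rho_path_conj.
Variables (R : realType) (n : nat) (X : topologicalType) (d : X -> X -> R).

Lemma rho_eq_homotopic x a a' b b' :
  based_homotopic R X n x a a' -> based_homotopic R X n x b b' ->
  rho R X d n x a b = rho R X d n x a' b'.
Proof.
move=> aa' bb'; congr ereal_inf; apply/seteqP.
split => _ [a1 [b1 [a1_b ha1 b1_b hb1 ->]]]; exists a1, b1; split => //.
- exact: based_homotopic_trans ha1 aa'.
- exact: based_homotopic_trans hb1 bb'.
- exact: based_homotopic_trans ha1 (based_homotopic_sym aa').
- exact: based_homotopic_trans hb1 (based_homotopic_sym bb').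
Qed.

Lemma rho_path_conj_le r (p : R -> X) x y a b :
  is_retraction R n r -> is_path R X p -> p 0 = x -> p 1 = y ->
  (forall x y, 0 <= d x y) -> (forall x, d x x = 0) ->
  (rho R X d n x (path_conj R X n r p a) (path_conj R X n r p b)
    <= rho R X d n y a b)%E.
Proof.
move=> r_retr p_path <- <- d_ge0 d_xx.
apply: le_ereal_inf_tmp => _ [a1 [b1 [a1_b ha1 b1_b hb1 ->]]].
apply: le_trans (mu_path_conj_le r_retr p a1 b1 d_ge0 d_xx).
apply: ereal_inf_lbound; exists (path_conj R X n r p a1), (path_conj R X n r p b1).
by split; [exact: based_map_path_conj|exact: based_homotopic_path_conj
          |exact: based_map_path_conj|exact: based_homotopic_path_conj|].
Qed.

End rho_path_conj.

Theorem proposition4p11 (R : realType) (X : pseudoMetricType R)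
    (d : X -> X -> R) (n : nat)
    (r : 'rV[R]_(n.+1) * R -> 'rV[R]_(n.+1) * R) (g : R -> X)
    (b1 b2 : 'rV[R]_(n.+1) -> X) :
  is_metric R X d -> path_connected_sp R X -> (1 <= n)%N ->
  is_retraction R n r -> is_path R X g ->
  based_map R X n (g 1) b1 -> based_map R X n (g 1) b2 ->
  rho R X d n (g 0) (path_conj R X n r g b1) (path_conj R X n r g b2)
  = rho R X d n (g 1) b1 b2.
Proof.
move=> [d_ge0 d_eq0 _ _ _] _ _ r_retr g_path b1_based b2_based.
have d_xx x : d x x = 0 by apply/d_eq0.
apply/eqP; rewrite eq_le rho_path_conj_le //=.
rewrite (rho_eq_homotopic d
  (based_homotopic_sym (path_conj_reverse_homotopic r_retr g_path b1_based))
  (based_homotopic_sym (path_conj_reverse_homotopic r_retr g_path b2_based))).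
apply: rho_path_conj_le => //; first exact: is_path_reverse.
  by rewrite /reverse_path subr0.
by rewrite /reverse_path subrr.
Qed.
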